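(* Impose (A1)–(A6) and (A8), and fix $x\in\mathcal X$, $u\in[0,1]$. Then $\underline{\Delta}(x,u)\le\Delta^{OO}_{Y^*}(x,u)\le\overline{\Delta}(x,u)$, where: (i) under (A7.1): $\underline\Delta(x,u)=\underline y^*-\frac{m_0^Y(x,u)}{m_0^S(x,u)}$ and $\overline\Delta(x,u)=\frac{m_1^Y(x,u)-\underline y^*\Delta_S(x,u)}{m_0^S(x,u)}-\frac{m_0^Y(x,u)}{m_0^S(x,u)}$; (ii) under (A7.2): $\underline\Delta(x,u)=\frac{m_1^Y(x,u)-\overline y^*\Delta_S(x,u)}{m_0^S(x,u)}-\frac{m_0^Y(x,u)}{m_0^S(x,u)}$ and $\overline\Delta(x,u)=\overline y^*-\frac{m_0^Y(x,u)}{m_0^S(x,u)}$; (iii) under (A7.3) (sub-case (a) or (b)): $\underline\Delta(x,u)=\max\left\{\frac{m_1^Y(x,u)-\overline y^*\Delta_S(x,u)}{m_0^S(x,u)},\underline y^*\right\}-\frac{m_0^Y(x,u)}{m_0^S(x,u)}$ and $\overline\Delta(x,u)=\min\left\{\frac{m_1^Y(x,u)-\underline y^*\Delta_S(x,u)}{m_0^S(x,u)},\overline y^*\right\}-\frac{m_0^Y(x,u)}{m_0^S(x,u)}$.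
   Context: Standing setup. On a common probability space: $X$ (covariates, support $\mathcal X$), $Z$ (instrument, support $\mathcal Z$), $W=(X,Z)$; latent real random variables $U,V$, jointly continuously distributed conditional on $X$, with $U\mid X$ and $V\mid X$ each Uniform$[0,1]$ (their joint dependence unrestricted); real potential outcomes of interest $Y_0^*,Y_1^*$. Given functions $P:\mathcal X\times\mathcal Z\to[0,1]$ and $Q:\{0,1\}\times\mathcal X\to[0,1]$, define the treatment $D=\mathbf 1\{P(W)\ge U\}$, potential selection indicators $S_d=\mathbf 1\{Q(d,X)\ge V\}$ ($d\in\{0,1\}$), selection indicator $S=DS_1+(1-D)S_0$, potential observable outcomes $Y_d=S_dY_d^*$ and observable outcome $Y=DY_1+(1-D)Y_0$. For $x\in\mathcal X$, $u\in[0,1]$, $d\in\{0,1\}$: $m_d^Y(x,u)=\mathbb E[Y_d\mid X=x,U=u]$, $m_d^S(x,u)=\mathbb E[S_d\mid X=x,U=u]$, $\Delta_S(x,u)=m_1^S(x,u)-m_0^S(x,u)$, and $\Delta^{OO}_{Y^*}(x,u)=\mathbb E[Y_1^*-Y_0^*\mid X=x,U=u,S_0=1,S_1=1]$. Ratios appearing are assumed well defined (nonzero denominators). Assumptions: (A1) $Z$ is independent of $(U,V,Y_0^*,Y_1^* )$ conditional on $X$; (A2) the distribution of $P(W)$ given $X$ is nondegenerate; (A3) $\mathbb E|Y_d^*|<\infty$ and $\mathbb E[(Y_d^* )^2]<\infty$ for $d=0,1$; (A4) $0<\mathbb P[D=1\mid X]<1$; (A5) $X$ is invariant to counterfactual manipulation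 of treatment; (A6) $Y_0^*$ and $Y_1^*$ have a common support $\mathcal Y^*\subseteq\mathbb R$; write $\underline y^*=\inf\mathcal Y^*\in\mathbb R\cup\{-\infty\}$ and $\overline y^*=\sup\mathcal Y^*\in\mathbb R\cup\{+\infty\}$, assumed known. Support cases: (A7.1) $\underline y^*>-\infty$, $\overline y^*=+\infty$, $\mathcal Y^*$ an interval; (A7.2) $\underline y^*=-\infty$, $\overline y^*<\infty$, $\mathcal Y^*$ an interval; (A7.3) $\underline y^*,\overline y^*$ both finite and either (a) $\mathcal Y^*$ is an interval or (b) $\underline y^*\in\mathcal Y^*$ and $\overline y^*\in\mathcal Y^*$. (A8) $Q(1,x)>Q(0,x)>0$ for all $x\in\mathcal X$. *)

From HB Require Import structures.
From mathcomp Require Import all_boot all_order all_algebra.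
From mathcomp Require Import all_classical all_reals all_analysis.
From mathcomp Require Import measurable_realfun.
Set Implicit Arguments.
Unset Strict Implicit.
Unset Printing Implicit Defensive.
Import Order.TTheory GRing.Theory Num.Theory.
Import numFieldNormedType.Exports.
Local Open Scope classical_set_scope.
Local Open Scope ring_scope.

(* Regular conditional distribution of the sample point w given the random
   element f : Om -> T, as a kernel K : T -> probability Om R, in disintegration
   form:  E[g ; f \in B] = E[ (\int g d(K (f w))) ; f \in B ]  for every
   measurable g >= 0 and measurable B, i.e. \int g d(K t) is a version of
   E[g | f = t]. *)
Definition is_rcd d d' (Om : measurableType d) (T : measurableType d')
  (R : realType) (P : probability Om R) (f : Om -> T)
  (K : T -> probability Om R) : Prop :=
  [/\ measurable_fun [set: Om] f,
      (forall A : set Om, measurable A ->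
         measurable_fun [set: T] (fun t : T => (K t A : \bar R))) &
      (forall g : Om -> \bar R, measurable_fun [set: Om] g ->
         (forall w, (0 <= g w)%E) ->
         forall B : set T, measurable B ->
           (\int[P]_(w in f @^-1` B) g w =
            \int[P]_(w in f @^-1` B) \int[K (f w)]_w' g w')%E)].

Definition Dind d dX dZ (Om : measurableType d) (TX : measurableType dX)
  (TZ : measurableType dZ) (R : realType) (X : Om -> TX) (Z : Om -> TZ)
  (U : Om -> R) (Pf : TX -> TZ -> R) (w : Om) : R :=
  if U w <= Pf (X w) (Z w) then 1 else 0.

Definition Sind d dX (Om : measurableType d) (TX : measurableType dX)
  (R : realType) (X : Om -> TX) (V : Om -> R) (Qf : bool -> TX -> R)
  (b : bool) (w : Om) : R :=
  if V w <= Qf b (X w) then 1 else 0.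

Definition Ypot d dX (Om : measurableType d) (TX : measurableType dX)
  (R : realType) (X : Om -> TX) (V : Om -> R) (Qf : bool -> TX -> R)
  (Y0s Y1s : Om -> R) (b : bool) (w : Om) : R :=
  Sind X V Qf b w * (if b then Y1s w else Y0s w).

(* m_d^Y at the conditioning value t = (x,u): E[Y_d | X = x, U = u]. *)
Definition mY d dX (Om : measurableType d) (TX : measurableType dX)
  (R : realType) (K : TX * R -> probability Om R) (X : Om -> TX)
  (V : Om -> R) (Qf : bool -> TX -> R) (Y0s Y1s : Om -> R)
  (b : bool) (t : TX * R) : R :=
  Rintegral (K t) setT (Ypot X V Qf Y0s Y1s b).

(* m_d^S at t = (x,u): E[S_d | X = x, U = u]. *)
Definition mS d dX (Om : measurableType d) (TX : measurableType dX)
  (R : realType) (K : TX * R -> probability Om R) (X : Om -> TX)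
  (V : Om -> R) (Qf : bool -> TX -> R) (b : bool) (t : TX * R) : R :=
  Rintegral (K t) setT (Sind X V Qf b).

Definition OOevent d dX (Om : measurableType d) (TX : measurableType dX)
  (R : realType) (X : Om -> TX) (V : Om -> R) (Qf : bool -> TX -> R) : set Om :=
  [set w | Sind X V Qf false w = 1 /\ Sind X V Qf true w = 1].

(* Delta^OO_{Y*}(x,u) = E[Y_1^* - Y_0^* | X = x, U = u, S_0 = 1, S_1 = 1]. *)
Definition DeltaOO d dX (Om : measurableType d) (TX : measurableType dX)
  (R : realType) (K : TX * R -> probability Om R) (X : Om -> TX)
  (V : Om -> R) (Qf : bool -> TX -> R) (Y0s Y1s : Om -> R) (t : TX * R) : R :=
  Rintegral (K t) (OOevent X V Qf) (fun w => Y1s w - Y0s w)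
  / fine (K t (OOevent X V Qf)).

Definition rv_support d (Om : measurableType d) (R : realType)
  (P : probability Om R) (Y : Om -> R) : set R :=
  [set y : R | forall e : R, 0 < e ->
    (0 < P [set w | (`|Y w - y| < e)%R])%E].

Definition is_interval_set (R : realType) (S : set R) : Prop :=
  forall a b c, S a -> S c -> a <= b -> b <= c -> S b.

From HB Require Import structures.
From mathcomp Require Import all_boot all_order all_algebra.
From mathcomp Require Import all_classical all_reals all_analysis.
From mathcomp Require Import measurable_realfun.
From mathcomp Require Import lra.
Set Implicit Arguments.
Import Order.TTheory GRing.Theory Num.Theory.
Import numFieldNormedType.Exports.
Local Open Scope classical_set_scope.
Local Open Scope ring_scope.

(* Monotone selection (A8) gives S_0 <= S_1, so the always-observed event is
   {S_0 = 1} and, conditionally on (X, U) = t,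
     Delta^OO = (E[S_0 Y_1] - m_0^Y) / m_0^S,   m_1^Y = E[S_0 Y_1] + E[(S_1 - S_0) Y_1].
   A P-null event is null for almost every conditional law, so for almost every
   t the outcome Y_1 lies between the endpoints of its support; as S_0 and
   S_1 - S_0 take values in [0, 1], this bounds E[S_0 Y_1] and E[(S_1 - S_0) Y_1]
   by the endpoints times m_0^S and Delta_S, and solving for E[S_0 Y_1] gives
   the bounds. *)

Lemma measurable_preimageT d d' (T1 : measurableType d) (T2 : measurableType d')
  (f : T1 -> T2) {B : set T2} :
  measurable_fun setT f -> measurable B -> measurable (f @^-1` B).
Proof. by move=> mf mB; rewrite -[_ @^-1` _]setTI; exact: mf. Qed.

Section support.
Context d (T : measurableType d) (R : realType) (P : probability T R).
Variable Y : T -> R.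
Hypothesis mY : measurable_fun setT Y.

Lemma compact_support_negligible (C : set R) : compact C ->
  (forall y, C y -> ~ rv_support P Y y) -> P.-negligible (Y @^-1` C).
Proof.
move=> cC Cns.
have /choice[e he] : forall y, exists e : R,
    C y -> 0 < e /\ P [set w | `|Y w - y| < e] = 0%E.
  move=> y; have [Cy|] := pselect (C y); last by exists 1.
  have /existsNP[e /not_implyP[e0 /negP]] := Cns y Cy.
  by rewrite lt0e measure_ge0 andbT negbK => /eqP Pe; exists e.
move: cC; rewrite compact_cover => /(_ R C (fun y => ball y (e y))).
case=> [y _|y Cy|D DC CD]; first exact: ball_open.
  by exists y => //; apply: ballxx; have [] := he y Cy.
apply: (negligibleS (preimage_subset CD)).
rewrite preimage_bigcup bigcup_fset big_seq.
elim/big_ind: _ => [|A B|y yD]; first exact: negligible_set0.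
  exact: negligibleU.
have [_ Pe] := he y (set_mem (DC y yD)).
exists [set w | `|Y w - y| < e y]; split => // [|w /=].
  rewrite (_ : [set w | _] = Y @^-1` ball y (e y)).
    exact: measurable_preimageT mY (open_measurable (ball_open _ _)).
  by apply/seteqP; split => w /=; rewrite -ball_normE /= distrC.
by rewrite -ball_normE /= distrC.
Qed.

Lemma rv_support_lbound_null (a : R) : (forall y, rv_support P Y y -> a <= y) ->
  P [set w | Y w < a] = 0%E.
Proof.
move=> lb; rewrite -preimage_itvNyo.
apply/negligibleP; first exact: measurable_preimageT.
pose C n m := `[- (m%:R : R), a - n.+1%:R^-1]%classic.
apply: (@negligibleS _ _ _ _ (\bigcup_n \bigcup_m Y @^-1` C n m)).
  move=> w; rewrite preimage_itv in_itv /= => Ya.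
  have [n Yn] := ltr_add_invr Ya.
  exists n => //; exists (Num.bound `|Y w|) => //=.
  rewrite /C /= in_itv /= lerBrDr (ltW Yn) andbT lerNl.
  by rewrite (le_trans (ler_norm _)) ?normrN// ltW// archi_boundP.
apply: negligible_bigcup => n; apply: negligible_bigcup => m.
apply: compact_support_negligible; first exact: segment_compact.
move=> y; rewrite /C /= in_itv /= => /andP[_ ya] /lb ay.
by move: (le_trans ay ya); rewrite lerBrDr gerDl leNgt invr_gt0 ltr0n.
Qed.
End support.

Lemma rv_support_ubound_null d (T : measurableType d) (R : realType)
    (P : probability T R) (Y : T -> R) (b : R) : measurable_fun setT Y ->
  (forall y, rv_support P Y y -> y <= b) -> P [set w | b < Y w] = 0%E.
Proof.
move=> mY ub; have mNY : measurable_fun setT (fun w => - Y w) by exact: measurableT_comp.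
rewrite (_ : [set w | b < Y w] = [set w | - Y w < - b]); last first.
  by apply/seteqP; split => w /=; rewrite ltrN2.
apply: (rv_support_lbound_null mNY) => y NYy; rewrite lerNl; apply: ub => e /NYy.
by congr (0 < P _)%E; apply/seteqP; split => w /=; rewrite -normrN opprD opprK addrC.
Qed.

Lemma filterS4 T (F : set_system T) (P Q R S U : set T) : Filter F ->
  (forall x, P x -> Q x -> R x -> S x -> U x) -> F P -> F Q -> F R -> F S -> F U.
Proof.
move=> FF PU FP FQ FR FS.
apply: filterS3 FP FQ (filterS2 _ (fun x Rx Sx => conj Rx Sx) FR FS) => x Px Qx [].
exact: PU.
Qed.

Lemma filter_ae_pushforward d d' (Om : measurableType d) (T : measurableType d')
  (R : realType) (P : {measure set Om -> \bar R}) (f : Om -> T) :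
  measurable_fun setT f -> Filter (almost_everywhere (pushforward P f)).
Proof. by move=> mf; exact: (@ae_filter_ringOfSetsType _ _ _ (pushforward P f)). Qed.

(* [pushforward P f] is a measure only under the hypothesis that [f] is
   measurable, so its a.e. filter is found from that hypothesis in the context. *)
#[local] Hint Extern 0 (Filter (nbhs (almost_everywhere (pushforward _ _)))) =>
  (apply filter_ae_pushforward; assumption) : typeclass_instances.

Section disintegration.
Context d d' (Om : measurableType d) (T : measurableType d') (R : realType).
Variables (P : probability Om R) (f : Om -> T) (K : T -> probability Om R).
Hypothesis rcd : is_rcd P f K.

Let mf : measurable_fun setT f. Proof. by case: rcd. Qed.

Let measurable_kernel A : measurable A -> measurable_fun setT (fun t => K t A).
Proof. by case: rcd => _ + _; apply. Qed.

Lemma ae_pushforward (Q : set T) : measurable Q ->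
  {ae P, forall w, Q (f w)} -> {ae pushforward P f, forall t, Q t}.
Proof.
move=> mQ [N [mN PN0 QN]]; exists (~` Q); split => //; first exact: measurableC.
by apply: subset_measure0 QN PN0 => //; exact: measurable_preimageT mf (measurableC mQ).
Qed.

Lemma integral_rcd (g : Om -> \bar R) : measurable_fun setT g ->
  (forall w, 0 <= g w)%E ->
  (\int[P]_w \int[K (f w)]_w' g w' = \int[P]_w g w)%E.
Proof.
case: rcd => _ _ dis mg g0.
by have := dis g mg g0 setT measurableT; rewrite preimage_setT => ->.
Qed.

Lemma rcd_ae_null (A : set Om) : measurable A -> P A = 0%E ->
  {ae pushforward P f, forall t, K t A = 0%E}.
Proof.
move=> mA PA0; apply: (@ae_pushforward ((fun t => K t A) @^-1` [set 0%E])).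
  exact: measurable_preimageT (measurable_kernel _ mA) (emeasurable_set1 _).
have mKA : measurable_fun setT (fun w => K (f w) A).
  exact: measurableT_comp (measurable_kernel _ mA) mf.
have : (\int[P]_w `|K (f w) A| = 0)%E.
  transitivity (\int[P]_w \int[K (f w)]_w' (\1_A w')%:E)%E.
    by apply: eq_integral => w _; rewrite gee0_abs// integral_indic// setIT.
  rewrite integral_rcd ?integral_indic ?setIT//.
  by apply/measurable_EFinP; exact: measurable_indic.
move/(ae_eq_integral_abs _ measurableT mKA).
by apply: filterS => w; apply.
Qed.

Lemma rcd_ae_integrable (Y : Om -> R) : measurable_fun setT Y ->
  P.-integrable setT (EFin \o Y) ->
  {ae pushforward P f, forall t, (K t).-integrable setT (EFin \o Y)}.
Proof.
move=> mY /integrableP[_ iY].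
pose h t := (\int[K t]_w `|(Y w)%:E|)%E.
have mabsY : measurable_fun setT (fun w => `|(Y w)%:E|%E).
  by apply: measurableT_comp => //; exact/measurable_EFinP.
have mh : measurable_fun setT h.
  exact: measurable_fun_integral_kernel.
suff : {ae pushforward P f, forall t, (h t < +oo)%E}.
  by apply: filterS => t hfin; apply/integrableP; split => //; exact/measurable_EFinP.
apply: (@ae_pushforward [set t | h t < +oo]%E).
  by rewrite -preimage_itvNyo; exact: measurable_preimageT mh (emeasurable_itv _).
have ihf : P.-integrable setT (h \o f).
  apply/integrableP; split; first exact: measurableT_comp mh mf.
  under eq_integral do rewrite gee0_abs ?integral_ge0//.
  by rewrite /= integral_rcd.
apply: filterS (integrable_ae measurableT ihf) => w /(_ I).
by rewrite ge0_fin_numE// integral_ge0.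
Qed.

End disintegration.

Section integral_bounds.
Context d (T : measurableType d) (R : realType)
  {mu : {finite_measure set T -> \bar R}}.

Lemma le_Rintegral_null (N : set T) (f1 f2 : T -> R) :
  measurable N -> mu N = 0%E ->
  mu.-integrable setT (EFin \o f1) -> mu.-integrable setT (EFin \o f2) ->
  (forall w, ~ N w -> f1 w <= f2 w) -> Rintegral mu setT f1 <= Rintegral mu setT f2.
Proof.
move=> mN N0 i1 i2 le12; have mCN := measurableC mN.
rewrite /Rintegral !(negligible_integral mN measurableT) // setTD.
by apply: le_Rintegral => //; [apply: integrableS i1|apply: integrableS i2].
Qed.

Variable phi : T -> R.
Hypotheses (mphi : measurable_fun setT phi) (phi01 : forall w, 0 <= phi w <= 1).

Lemma integrable_mul01 (Y : T -> R) : measurable_fun setT Y ->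
  mu.-integrable setT (EFin \o Y) ->
  mu.-integrable setT (EFin \o (fun w => phi w * Y w)).
Proof.
move=> mY iY; apply: le_integrable iY => //.
  by apply/measurable_EFinP; exact: measurable_funM.
move=> w _ /=; rewrite lee_fin normrM ler_piMl//.
by have /andP[phi0 phi1] := phi01 w; rewrite ger0_norm.
Qed.

Lemma integrable_01 : mu.-integrable setT (EFin \o phi).
Proof.
have -> : phi = (fun w => phi w * cst 1 w) by apply/funext => w; rewrite mulr1.
exact: integrable_mul01 (finite_measure_integrable_cst _ _ measurableT).
Qed.

Variable Y : T -> R.
Hypotheses (mY : measurable_fun setT Y) (iY : mu.-integrable setT (EFin \o Y)).

Lemma Rintegral_mul_lbound (a : R) : mu [set w | Y w < a] = 0%E ->
  a * Rintegral mu setT phi <= Rintegral mu setT (fun w => phi w * Y w).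
Proof.
move=> Ya0; rewrite -RintegralZl//; last exact: integrable_01.
apply: le_Rintegral_null Ya0 _ (integrable_mul01 mY iY) _.
- by rewrite -preimage_itvNyo; exact: measurable_preimageT.
- exact: integrableZl integrable_01.
move=> w /negP; rewrite -leNgt => aY; rewrite mulrC ler_wpM2l//.
by case/andP: (phi01 w).
Qed.

Lemma Rintegral_mul_ubound (b : R) : mu [set w | b < Y w] = 0%E ->
  Rintegral mu setT (fun w => phi w * Y w) <= b * Rintegral mu setT phi.
Proof.
move=> Yb0; rewrite -RintegralZl//; last exact: integrable_01.
apply: le_Rintegral_null Yb0 (integrable_mul01 mY iY) _ _.
- by rewrite -preimage_itvoy; exact: measurable_preimageT.
- exact: integrableZl integrable_01.
move=> w /negP; rewrite -leNgt => Yb; rewrite [b * _]mulrC ler_wpM2l//.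
by case/andP: (phi01 w).
Qed.

End integral_bounds.

Section ratio_bounds.
Variable R : realFieldType.
Implicit Types (a b A C c e s : R).

Lemma bounds_of_lbound a A C c e s : 0 < s -> a * s <= A -> a * e <= C ->
  a - c / s <= (A - c) / s /\ (A - c) / s <= (A + C - a * e) / s - c / s.
Proof.
move=> s0 aA aC; rewrite [(A - c) / s]mulrBl; split; rewrite lerD2r.
  by rewrite ler_pdivlMr.
by rewrite ler_pM2r ?invr_gt0//; lra.
Qed.

Lemma bounds_of_ubound b A C c e s : 0 < s -> A <= b * s -> C <= b * e ->
  (A + C - b * e) / s - c / s <= (A - c) / s /\ (A - c) / s <= b - c / s.
Proof.
move=> s0 Ab Cb; rewrite [(A - c) / s]mulrBl; split; rewrite lerD2r; last first.
  by rewrite ler_pdivrMr.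
by rewrite ler_pM2r ?invr_gt0//; lra.
Qed.

End ratio_bounds.

Section always_observed.
Context d dX (Om : measurableType d) (TX : measurableType dX) (R : realType)
  {X : Om -> TX} {V : Om -> R} {Qf : bool -> TX -> R}.
Hypotheses (mX : measurable_fun setT X) (mV : measurable_fun setT V)
  (mQf : forall b, measurable_fun setT (Qf b))
  (Qf_mono : forall x, Qf false x <= Qf true x).

Local Notation S := (Sind X V Qf).

Lemma SindE b : S b = \1_[set w | V w <= Qf b (X w)].
Proof.
apply/funext => w; rewrite /Sind indicE.
by case: ifPn => [Vw|/negP Vw]; [rewrite mem_set|rewrite memNset].
Qed.

Lemma measurable_selected b : measurable [set w | V w <= Qf b (X w)].
Proof.
rewrite -[X in measurable X]setTI.
by apply: measurable_fun_le => //; exact: measurableT_comp.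
Qed.

Lemma measurable_Sind b : measurable_fun setT (S b).
Proof. by rewrite SindE; exact/measurable_indic/measurable_selected. Qed.

Lemma Sind_itv b w : 0 <= S b w <= 1.
Proof. by rewrite /Sind; case: ifPn; rewrite ?lexx ?ler01. Qed.

Lemma Sind_mono w : S false w <= S true w.
Proof.
rewrite /Sind; case: ifPn => [Vw|_]; last by case: ifPn; rewrite ?ler01.
by rewrite ifT// (le_trans Vw).
Qed.

Lemma Sind_sub_itv w : 0 <= S true w - S false w <= 1.
Proof.
rewrite subr_ge0 Sind_mono /=.
by case/andP: (Sind_itv false w) => S0 _; case/andP: (Sind_itv true w) => _ S1; lra.
Qed.

Lemma OOeventE : OOevent X V Qf = [set w | V w <= Qf false (X w)].
Proof.
apply/seteqP; split => w; rewrite /OOevent /Sind /=.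
  by case: ifPn => // _ [/eqP]; rewrite eq_sym oner_eq0.
by move=> Vw; rewrite ifT// ifT// (le_trans Vw).
Qed.

Context {K : TX * R -> probability Om R} {t : TX * R}.

Local Notation m_S b := (mS K X V Qf b t).

Lemma mS_ge0 b : 0 <= m_S b.
Proof. by apply: Rintegral_ge0 => w _; case/andP: (Sind_itv b w). Qed.

Lemma mS_falseE : m_S false = fine (K t (OOevent X V Qf)).
Proof.
rewrite /mS SindE /Rintegral integral_indic ?setIT ?OOeventE//.
exact: measurable_selected.
Qed.

Lemma Rintegral_OOevent (Y : Om -> R) :
  Rintegral (K t) (OOevent X V Qf) Y = Rintegral (K t) setT (fun w => S false w * Y w).
Proof.
rewrite Rintegral_mkcond; apply: eq_Rintegral => w _.
by rewrite SindE patchE indicE OOeventE; case: (w \in _); rewrite ?mul1r ?mul0r.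
Qed.

Context {Y0 Y1 : Om -> R}.
Hypotheses (mY1 : measurable_fun setT Y1)
  (iY0 : (K t).-integrable setT (EFin \o Y0))
  (iY1 : (K t).-integrable setT (EFin \o Y1)).

Local Notation m_Y b := (mY K X V Qf Y0 Y1 b t).
Local Notation Delta := (DeltaOO K X V Qf Y0 Y1 t).

Lemma DeltaOOE :
  Delta = (Rintegral (K t) setT (fun w => S false w * Y1 w) - m_Y false) / m_S false.
Proof.
have mOO : measurable (OOevent X V Qf) by rewrite OOeventE; exact: measurable_selected.
rewrite /DeltaOO mS_falseE RintegralB//; last 2 first.
- exact: integrableS iY1.
- exact: integrableS iY0.
by rewrite !Rintegral_OOevent.
Qed.

Let measurable_Sind_sub := measurable_funB (measurable_Sind true) (measurable_Sind false).

Lemma mY_trueE : m_Y true =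
  Rintegral (K t) setT (fun w => S false w * Y1 w)
  + Rintegral (K t) setT (fun w => (S true w - S false w) * Y1 w).
Proof.
rewrite -RintegralD; last 3 first.
- exact: measurableT.
- exact (integrable_mul01 (measurable_Sind false) (Sind_itv false) mY1 iY1).
- exact (integrable_mul01 measurable_Sind_sub Sind_sub_itv mY1 iY1).
by rewrite /mY; apply: eq_Rintegral => w _; rewrite /Ypot -mulrDl addrC subrK.
Qed.

Lemma mS_subE : m_S true - m_S false =
  Rintegral (K t) setT (fun w => S true w - S false w).
Proof.
by rewrite RintegralB//; exact: integrable_01 (measurable_Sind _) (Sind_itv _).
Qed.

Lemma DeltaOO_bounds_of_lbound (a : R) :
  K t [set w | Y1 w < a] = 0%E -> m_S false != 0 ->
  a - m_Y false / m_S false <= Delta /\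
  Delta <= (m_Y true - a * (m_S true - m_S false)) / m_S false - m_Y false / m_S false.
Proof.
move=> Y1a m0S_neq0.
have m0S_gt0 : 0 < m_S false by rewrite lt_def m0S_neq0 mS_ge0.
rewrite DeltaOOE mY_trueE mS_subE; apply: bounds_of_lbound => //.
- exact (Rintegral_mul_lbound (measurable_Sind false) (Sind_itv false) mY1 iY1 a Y1a).
- exact (Rintegral_mul_lbound measurable_Sind_sub Sind_sub_itv mY1 iY1 a Y1a).
Qed.

Lemma DeltaOO_bounds_of_ubound (b : R) :
  K t [set w | b < Y1 w] = 0%E -> m_S false != 0 ->
  (m_Y true - b * (m_S true - m_S false)) / m_S false - m_Y false / m_S false <= Delta /\
  Delta <= b - m_Y false / m_S false.
Proof.
move=> Y1b m0S_neq0.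
have m0S_gt0 : 0 < m_S false by rewrite lt_def m0S_neq0 mS_ge0.
rewrite DeltaOOE mY_trueE mS_subE; apply: bounds_of_ubound => //.
- exact (Rintegral_mul_ubound (measurable_Sind false) (Sind_itv false) mY1 iY1 b Y1b).
- exact (Rintegral_mul_ubound measurable_Sind_sub Sind_sub_itv mY1 iY1 b Y1b).
Qed.

End always_observed.
Unset Implicit Arguments.

Theorem corollary1 (R : realType) (dO dX dZ : measure_display)
  (Om : measurableType dO) (TX : measurableType dX) (TZ : measurableType dZ)
  (P : probability Om R)
  (X : {mfun Om >-> TX}) (Z : {mfun Om >-> TZ})
  (U V Y0s Y1s : {mfun Om >-> R})
  (Pf : TX -> TZ -> R) (Qf : bool -> TX -> R)
  (KX : TX -> probability Om R) (KXU : TX * R -> probability Om R)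
  (Ystar : set R)
  (* P : X x Z -> [0,1] and Q : {0,1} x X -> [0,1], measurable *)
  (hPf01 : forall x z, 0 <= Pf x z <= 1)
  (hQf01 : forall b x, 0 <= Qf b x <= 1)
  (mPf : measurable_fun [set: TX * TZ] (fun xz => Pf xz.1 xz.2))
  (mQf : forall b, measurable_fun [set: TX] (Qf b))
  (* KX and KXU are regular conditional distributions given X and (X,U) *)
  (rcdX : is_rcd P X KX)
  (rcdXU : is_rcd P (fun w => (X w, U w)) KXU)
  (* U | X ~ Uniform[0,1], V | X ~ Uniform[0,1] *)
  (U_unif : {ae pushforward P X, forall x : TX, forall t : R, 0 <= t <= 1 ->
     KX x [set w | U w <= t] = t%:E})
  (V_unif : {ae pushforward P X, forall x : TX, forall t : R, 0 <= t <= 1 ->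
     KX x [set w | V w <= t] = t%:E})
  (* (U,V) jointly continuously distributed conditional on X *)
  (UV_cont : {ae pushforward P X, forall x : TX, forall N : set (R * R),
     measurable N -> product_measure1 (@lebesgue_measure R) (@lebesgue_measure R) N = 0%E ->
     KX x [set w | N (U w, V w)] = 0%E})
  (* (A1) Z independent of (U, V, Y0s, Y1s) conditional on X *)
  (A1 : {ae pushforward P X, forall x : TX,
     forall (B : set TZ) (C : set ((R * R) * (R * R))),
     measurable B -> measurable C ->
     KX x (Z @^-1` B `&` [set w | C ((U w, V w), (Y0s w, Y1s w))]) =
     (KX x (Z @^-1` B) * KX x [set w | C ((U w, V w), (Y0s w, Y1s w))])%E})
  (* (A2) the distribution of P(W) given X is nondegenerate *)
  (A2 : {ae pushforward P X, forall x : TX,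
     ~ (exists c : R, KX x [set w | Pf (X w) (Z w) = c] = 1%E)})
  (* (A3) first and second moments of Y0s, Y1s finite *)
  (A3 : forall b : bool,
     P.-integrable setT (fun w => ((if b then Y1s else Y0s) w)%:E) /\
     P.-integrable setT (fun w => (((if b then Y1s else Y0s) w) ^+ 2)%:E))
  (* (A4) 0 < P[D = 1 | X] < 1 *)
  (A4 : {ae pushforward P X, forall x : TX,
     (0 < KX x [set w | Dind X Z U Pf w = 1%R] < 1)%E})
  (* (A6) Y0s and Y1s have common support Ystar *)
  (A6 : rv_support P Y0s = Ystar /\ rv_support P Y1s = Ystar)
  (* (A8) Q(1,x) > Q(0,x) > 0 *)
  (A8 : forall x, 0 < Qf false x < Qf true x) :
  let ylo := ereal_inf [set y%:E | y in Ystar] in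
  let yhi := ereal_sup [set y%:E | y in Ystar] in
  let m0Y := mY KXU X V Qf Y0s Y1s false in
  let m1Y := mY KXU X V Qf Y0s Y1s true in
  let m0S := mS KXU X V Qf false in
  let DS := fun t => mS KXU X V Qf true t - mS KXU X V Qf false t in
  let DOO := DeltaOO KXU X V Qf Y0s Y1s in
  (* (i) under (A7.1) *)
  (forall a : R, ylo = a%:E -> yhi = +oo%E -> is_interval_set Ystar ->
   {ae pushforward P (fun w => (X w, U w)), forall t : TX * R,
     m0S t != 0 -> fine (KXU t (OOevent X V Qf)) != 0 ->
     a - m0Y t / m0S t <= DOO t /\
     DOO t <= (m1Y t - a * DS t) / m0S t - m0Y t / m0S t}) /\
  (* (ii) under (A7.2) *)
  (forall b : R, ylo = -oo%E -> yhi = b%:E -> is_interval_set Ystar ->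
   {ae pushforward P (fun w => (X w, U w)), forall t : TX * R,
     m0S t != 0 -> fine (KXU t (OOevent X V Qf)) != 0 ->
     (m1Y t - b * DS t) / m0S t - m0Y t / m0S t <= DOO t /\
     DOO t <= b - m0Y t / m0S t}) /\
  (* (iii) under (A7.3), sub-case (a) or (b) *)
  (forall a b : R, ylo = a%:E -> yhi = b%:E ->
   (is_interval_set Ystar \/ (Ystar a /\ Ystar b)) ->
   {ae pushforward P (fun w => (X w, U w)), forall t : TX * R,
     m0S t != 0 -> fine (KXU t (OOevent X V Qf)) != 0 ->
     Num.max ((m1Y t - b * DS t) / m0S t) a - m0Y t / m0S t <= DOO t /\
     DOO t <= Num.min ((m1Y t - a * DS t) / m0S t) b - m0Y t / m0S t}).
Proof.
move=> ylo yhi m0Y m1Y m0S DS DOO.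
(* [mf] provides the a.e. filter of the pushforward used by [filterS3]. *)
have mf : measurable_fun setT (fun w => (X w, U w)) by case: rcdXU.
have Qf_mono x : Qf false x <= Qf true x by case/andP: (A8 x) => _ /ltW.
have iY0 := rcd_ae_integrable rcdXU (measurable_funP Y0s) (A3 false).1.
have iY1 := rcd_ae_integrable rcdXU (measurable_funP Y1s) (A3 true).1.
have lb_ae a : ylo = a%:E ->
    {ae pushforward P (fun w => (X w, U w)), forall t, KXU t [set w | Y1s w < a] = 0%E}.
  move=> ylo_a; apply (rcd_ae_null rcdXU).
    by rewrite -preimage_itvNyo; exact: measurable_funPTI.
  apply: rv_support_lbound_null => // y; rewrite A6.2 => Yy.
  by rewrite -lee_fin -ylo_a; apply: ereal_inf_lbound; exists y.
have ub_ae b : yhi = b%:E ->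
    {ae pushforward P (fun w => (X w, U w)), forall t, KXU t [set w | b < Y1s w] = 0%E}.
  move=> yhi_b; apply (rcd_ae_null rcdXU).
    by rewrite -preimage_itvoy; exact: measurable_funPTI.
  apply: rv_support_ubound_null => // y; rewrite A6.2 => Yy.
  by rewrite -lee_fin -yhi_b; apply: ereal_sup_ubound; exists y.
have mX : measurable_fun setT X := measurable_funP X.
have mV : measurable_fun setT V := measurable_funP V.
have mY1 : measurable_fun setT Y1s := measurable_funP Y1s.
split; [|split].
- move=> a /lb_ae lb _ _; apply: filterS3 iY0 iY1 lb => t i0 i1 Y1a m0 _.
  exact (DeltaOO_bounds_of_lbound mX mV mQf Qf_mono mY1 i0 i1 a Y1a m0).
- move=> b _ /ub_ae ub _; apply: filterS3 iY0 iY1 ub => t i0 i1 Y1b m0 _.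
  exact (DeltaOO_bounds_of_ubound mX mV mQf Qf_mono mY1 i0 i1 b Y1b m0).
- move=> a b /lb_ae lb /ub_ae ub _.
  apply: filterS4 iY0 iY1 lb ub => t i0 i1 Y1a Y1b m0 _.
  have [lo_a up_a] := DeltaOO_bounds_of_lbound mX mV mQf Qf_mono mY1 i0 i1 a Y1a m0.
  have [lo_b up_b] := DeltaOO_bounds_of_ubound mX mV mQf Qf_mono mY1 i0 i1 b Y1b m0.
  split; first by rewrite lerBlDr ge_max -!lerBlDr lo_b lo_a.
  by rewrite lerBrDr le_min -!lerBrDr up_a up_b.
Qed.
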